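(* Let $\beta>0$, $m\ge1$, and let $j\ne k$ and $s$ be positive integers with $\max\{jm,km\}\le s$. Fix any values of $f_2,\dots,f_s$ (so $H_s$ is fixed), let $e_1$ be a half-edge at $w_j$ in $H_s$ and $e_2$ a half-edge at $w_k$ in $H_s$, and for $t\ge s$ let $A_t$ be the block of $\Pi_{j,s}(t)$ containing $e_1$ and $B_t$ the block of $\Pi_{k,s}(t)$ containing $e_2$ (so neither is a base block). Then for all $t\ge s$, \[ \mathbb{E}[|A_t||B_t|]\le\mathbb{E}[|A_t|]\,\mathbb{E}[|B_t|]\le (t/s)^{2/(2+\beta)}\left(1+O(1/s)\right), \] where expectations are over $f_{s+1},\dots,f_t$ and the implied constant depends only on $\beta$.
   Context: Fix a real $\beta>0$ and a positive integer $m$. The random tree process $(G^n_{1,\beta})_{n\ge1}$ is defined as follows. $G^1_{1,\beta}$ consists of a single vertex $v_1$ and no edges. Given $G^n_{1,\beta}$ with vertices $v_1,\dots,v_n$ and directed edges $e_2,\dots,e_n$ (where $e_i$ is the edge whose tail is $v_i$), $G^{n+1}_{1,\beta}$ is obtained by adding a vertex $v_{n+1}$ and a directed edge $e_{n+1}$ with tail $v_{n+1}$ and head a ''target vertex'' determined by a random variable $f_{n+1}$, independent of $f_2,\dots,f_n$, taking values in $\Omega_{n+1}=\{(i,v):1\le i\le n\}\cup\{(i,h),(i,t):2\le i\le n\}$ with $\Pr(f_{n+1}=(i,v))=\beta/((2+\beta)n-2)$ and $\Pr(f_{n+1}=(i,h))=\Pr(f_{n+1}=(i,t))=1/((2+\beta)n-2)$.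 If $f_{n+1}=(i,v)$ the target is $v_i$ (chosen ''uniformly''); if $f_{n+1}=(i,h)$ the target is the head of $e_i$, and if $f_{n+1}=(i,t)$ the target is the tail $v_i$ of $e_i$ (chosen ''preferentially'', by copying the head half-edge, resp. tail half-edge, of $e_i$). Consequently the target is $v_i$ with probability $(d_n(v_i)+\beta)/((2+\beta)n-2)$, where $d_n(v)$ is the degree of $v$ in $G^n_{1,\beta}$. Each edge is regarded as two half-edges, one at each endpoint; the degree of a vertex is the number of half-edges at it (loops count twice). For $t\ge1$, $H_t$ is the undirected multigraph formed from $G^t_{1,\beta}$ by identifying, for each $j<\lceil t/m\rceil$, the vertices $v_{(j-1)m+1},\dots,v_{jm}$ into one vertex $w_j$, and identifying the remaining vertices into one vertex $w_{\lceil t/m\rceil}$ (all edges kept). For a vertex $w_k$ of $H_s$ with $km\le s$ and $t\ge s$, the partition $\Pi_{k,s}(t)$ of the half-edges at $w_k$ in $H_t$ is defined inductively: $\Pi_{k,s}(s)$ consists of a singleton block for each of the $d_s(w_k)$ half-edges at $w_k$ in $H_s$ together with one additional, initially empty, ''base block''. For $t>s$: if the target of the edge $e_t$ added at time $t$ does not lie in $w_k$, then $\Pi_{k,s}(t)=\Pi_{k,s}(t-1)$; if it does, and it was chosen preferentially by copying a half-edge lying in a block $A$ of $\Pi_{k,s}(t-1)$, then the head half-edge of $e_t$ is added to $A$; if it was chosen uniformly, the head half-edge of $e_t$ is added to the base block. *)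

From Stdlib Require Import Reals List Arith.
Import ListNotations.
Open Scope R_scope.

(** The value of f_n : element of Omega_n.
    [Unif i] = (i,v), [HeadC i] = (i,h), [TailC i] = (i,t). *)
Inductive choice : Type :=
| Unif : nat -> choice
| HeadC : nat -> choice
| TailC : nat -> choice.

Definition Omega (n : nat) : list choice :=
  map Unif (seq 1 (n - 1)) ++ map HeadC (seq 2 (n - 2)) ++ map TailC (seq 2 (n - 2)).

Definition in_Omega (n : nat) (c : choice) : Prop :=
  match c with
  | Unif i => (1 <= i <= n - 1)%nat
  | HeadC i | TailC i => (2 <= i <= n - 1)%nat
  end.

Definition prob (beta : R) (n : nat) (c : choice) : R :=
  (match c with Unif _ => beta | _ => 1 end) / ((2 + beta) * INR (n - 1) - 2).

(** A history: f n is the value of f_n (only n >= 2 matter). *)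
Definition history := nat -> choice.

Definition update (f : history) (n : nat) (c : choice) : history :=
  fun k => if Nat.eqb k n then c else f k.

(** Index of the target vertex of edge e_n (fuel-based recursion; fuel n suffices). *)
Fixpoint target_aux (fuel : nat) (f : history) (n : nat) : nat :=
  match fuel with
  | O => O
  | S fu =>
      match f n with
      | Unif i => i
      | TailC i => i
      | HeadC i => target_aux fu f i
      end
  end.

Definition target (f : history) (n : nat) : nat := target_aux n f n.

(** Half-edges: (i, true) = head half-edge of e_i, (i, false) = tail half-edge of e_i. *)
Definition halfedge := (nat * bool)%type.

Definition hvert (f : history) (h : halfedge) : nat :=
  if snd h then target f (fst h) else fst h.

(** Index k of the vertex w_k of H_t containing v_i: w_k = {v_((k-1)m+1),...,v_(km)},
    the last vertex of H_t collecting the remaining v_i, i <= t; i.e. k = ceil(i/m). *)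
Definition group (m i : nat) : nat := ((i + m - 1) / m)%nat.

Definition halfedges (t : nat) : list halfedge :=
  flat_map (fun i => [(i, true); (i, false)]) (seq 2 (t - 1)).

(** [inblock s e f h]: in the partition Pi_{.,s}(t), the half-edge h lies in the
    (non-base) block that started as the singleton {e}.  Half-edges present at time s
    form singleton blocks; a head half-edge of e_n (n > s) chosen preferentially by
    copying half-edge g joins the block of g; chosen uniformly it joins the base block. *)
Fixpoint inblock_aux (fuel : nat) (s : nat) (e : halfedge) (f : history)
  (h : halfedge) : bool :=
  match fuel with
  | O => false
  | S fu =>
      if Nat.leb (fst h) s then (Nat.eqb (fst h) (fst e) && Bool.eqb (snd h) (snd e))%bool
      else if snd h then
        match f (fst h) with
        | Unif _ => false
        | HeadC i => inblock_aux fu s e f (i, true)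
        | TailC i => inblock_aux fu s e f (i, false)
        end
      else false
  end.

Definition inblock (s : nat) (e : halfedge) (f : history) (h : halfedge) : bool :=
  inblock_aux (S (fst h)) s e f h.

(** |block of Pi_{k,s}(t) containing e| : number of half-edges of H_t at w_k in that block. *)
Definition block_size (m k s t : nat) (e : halfedge) (f : history) : R :=
  INR (length (filter (fun h => (Nat.eqb (group m (hvert f h)) k && inblock s e f h)%bool)
                 (halfedges t))).

(** Expectation over f_n, ..., f_(n+len-1) (independent, f_j distributed on Omega_j),
    the earlier values being those of f. *)
Fixpoint expect (beta : R) (len n : nat) (f : history) (X : history -> R) : R :=
  match len with
  | O => X f
  | S l =>
      fold_right Rplus 0
        (map (fun c => prob beta n c * expect beta l (S n) (update f n c) X) (Omega n))
  end.

Definition E (beta : R) (s t : nat) (f : history) (X : history -> R) : R :=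
  expect beta (t - s) (S s) f X.

(** Fix the history up to time [s] and a half-edge [e] present at time [s].  The
    block of [e] only ever receives head half-edges that copy a half-edge already
    in the block, so all its members stay at the vertex of [e] (Section Blocks),
    and its size [X_N] at time [N] grows by one exactly when [f_(N+1)] copies one
    of its [X_N] half-edges, which has probability [X_N / D_N] with
    [D_N = (2+beta) N - 2].  Hence [E[X_(N+1) | f] = (1 + 1/D_N) X_N]; for blocks
    at two distinct vertices the increments are mutually exclusive, so
    [E[X_(N+1) Y_(N+1) | f] = (1 + 2/D_N) X_N Y_N].  A general lemma on
    expectations of such geometric quantities (Section Expectation) turns these
    one-step identities into [E[|A_t|] = prod_N (1 + 1/D_N)] and
    [E[|A_t||B_t|] = prod_N (1 + 2/D_N)] (Section Moments).  The first claimed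
    inequality is then [1 + 2/D <= (1 + 1/D)^2]; the second follows from
    [1 + 1/D_N <= exp (phi (N+1) - phi N)] with the potential
    [phi x = ln x / (2+beta) - 2/x], which telescopes and yields the constant
    [C = 4 e^2] (Section Growth). *)

From Stdlib Require Import Reals Lra Lia List.
Import ListNotations.
Open Scope R_scope.

Definition valid (N : nat) (f : history) : Prop :=
  forall i, (2 <= i <= N)%nat -> in_Omega i (f i).

Definition agree (n : nat) (f g : history) : Prop :=
  forall i, (i <= n)%nat -> g i = f i.

Lemma valid_mono N M f : (M <= N)%nat -> valid N f -> valid M f.
Proof. intros HMN V i Hi. apply V. lia. Qed.

Lemma agree_mono n m f g : (m <= n)%nat -> agree n f g -> agree m f g.
Proof. intros Hmn A i Hi. apply A. lia. Qed.

Lemma valid_copy N f n i : valid N f -> (2 <= n <= N)%nat ->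
  f n = HeadC i \/ f n = TailC i -> (2 <= i < n)%nat.
Proof. intros V Hn [E|E]; specialize (V n Hn); rewrite E in V; simpl in V; lia. Qed.

Lemma update_eq f n c : update f n c n = c.
Proof. unfold update. now rewrite Nat.eqb_refl. Qed.

Lemma update_neq f n c i : i <> n -> update f n c i = f i.
Proof. intros H. unfold update. now destruct (Nat.eqb_spec i n). Qed.

Lemma in_Omega_of n c : In c (Omega n) -> in_Omega n c.
Proof.
  unfold Omega. rewrite !in_app_iff, !in_map_iff.
  intros [[i [<- Hi]]|[[i [<- Hi]]|[i [<- Hi]]]]; apply in_seq in Hi; simpl; lia.
Qed.

Lemma valid_update N f c : valid N f -> In c (Omega (S N)) ->
  valid (S N) (update f (S N) c).
Proof.
  intros V Hc i Hi. destruct (Nat.eq_dec i (S N)) as [->|ne].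
  - rewrite update_eq. now apply in_Omega_of.
  - rewrite update_neq by exact ne. apply V. lia.
Qed.

Lemma agree_update n N f g c : (n <= N)%nat -> agree n f g ->
  agree n f (update g (S N) c).
Proof. intros HnN A i Hi. rewrite update_neq by lia. now apply A. Qed.

Lemma target_aux_stable f g : forall a b n, valid n f -> agree n f g -> (2 <= n)%nat ->
  (n <= a)%nat -> (n <= b)%nat -> target_aux a g n = target_aux b f n.
Proof.
  intro a. induction a as [|a IH]; intros b n V A Hn Ha Hb; [lia|].
  destruct b as [|b]; [lia|]. cbn [target_aux].
  rewrite (A n (le_n n)). destruct (f n) as [i|i|i] eqn:E; [reflexivity| |reflexivity].
  pose proof (valid_copy n f n i V ltac:(lia) (or_introl E)).
  apply IH; [apply (valid_mono n)|apply (agree_mono n)|..]; auto; lia.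
Qed.

Lemma target_unfold N f n : valid N f -> (2 <= n <= N)%nat ->
  target f n = match f n with Unif i | TailC i => i | HeadC i => target f i end.
Proof.
  intros V Hn. unfold target. destruct n as [|n']; [lia|]. cbn [target_aux].
  destruct (f (S n')) as [i|i|i] eqn:E; [reflexivity| |reflexivity].
  pose proof (valid_copy N f (S n') i V Hn (or_introl E)).
  apply target_aux_stable; [apply (valid_mono N)|intros j _; reflexivity|..]; auto; lia.
Qed.

Lemma hvert_agree n f g e : valid n f -> agree n f g -> (2 <= fst e <= n)%nat ->
  hvert g e = hvert f e.
Proof.
  intros V A He. unfold hvert, target. destruct (snd e); [|reflexivity].
  apply target_aux_stable; [apply (valid_mono n)|apply (agree_mono n)|..]; auto; lia.
Qed.

(** ** Blocks of the partition [Pi_(.,s)] *)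

Section Blocks.

Variable s : nat.
Variable e : halfedge.

Lemma inblock_early f h : (fst h <= s)%nat ->
  inblock s e f h = ((fst h =? fst e) && Bool.eqb (snd h) (snd e))%bool.
Proof.
  intros Hh. unfold inblock. cbn [inblock_aux].
  now replace (Nat.leb (fst h) s) with true by (symmetry; apply Nat.leb_le; lia).
Qed.

Lemma inblock_tail f n : (s < n)%nat -> inblock s e f (n, false) = false.
Proof.
  intros Hn. unfold inblock. cbn [inblock_aux fst snd].
  now replace (Nat.leb n s) with false by (symmetry; apply Nat.leb_gt; lia).
Qed.

Hypothesis s_pos : (1 <= s)%nat.

Lemma inblock_aux_stable f g : forall a b h, valid (fst h) f -> agree (fst h) f g ->
  (fst h < a)%nat -> (fst h < b)%nat -> inblock_aux a s e g h = inblock_aux b s e f h.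
Proof.
  intro a. induction a as [|a IH]; intros b h V A Ha Hb; [lia|].
  destruct b as [|b]; [lia|]. cbn [inblock_aux].
  destruct (Nat.leb (fst h) s) eqn:L; [reflexivity|]. apply Nat.leb_gt in L.
  destruct (snd h); [|reflexivity].
  rewrite (A (fst h) (le_n _)).
  destruct (f (fst h)) as [i|i|i] eqn:E; [reflexivity| |].
  - pose proof (valid_copy (fst h) f (fst h) i V ltac:(lia) (or_introl E)).
    apply IH; [apply (valid_mono (fst h))|apply (agree_mono (fst h))|..]; simpl; auto; lia.
  - pose proof (valid_copy (fst h) f (fst h) i V ltac:(lia) (or_intror E)).
    apply IH; [apply (valid_mono (fst h))|apply (agree_mono (fst h))|..]; simpl; auto; lia.
Qed.

Lemma inblock_agree n f g h : valid n f -> agree n f g -> (fst h <= n)%nat ->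
  inblock s e g h = inblock s e f h.
Proof.
  intros V A Hh. apply inblock_aux_stable;
    [apply (valid_mono n)|apply (agree_mono n)|..]; auto; lia.
Qed.

Lemma inblock_head N f n : valid N f -> (s < n <= N)%nat ->
  inblock s e f (n, true) = match f n with
     | Unif _ => false
     | HeadC i => inblock s e f (i, true)
     | TailC i => inblock s e f (i, false) end.
Proof.
  intros V Hn. unfold inblock at 1. cbn [inblock_aux fst snd].
  replace (Nat.leb n s) with false by (symmetry; apply Nat.leb_gt; lia).
  destruct (f n) as [i|i|i] eqn:E; [reflexivity| |].
  - pose proof (valid_copy N f n i V ltac:(lia) (or_introl E)).
    apply inblock_aux_stable; [apply (valid_mono N)|intros j _|..]; simpl; auto; lia.
  - pose proof (valid_copy N f n i V ltac:(lia) (or_intror E)).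
    apply inblock_aux_stable; [apply (valid_mono N)|intros j _|..]; simpl; auto; lia.
Qed.

Lemma inblock_hvert N f : valid N f -> forall h, (2 <= fst h <= N)%nat ->
  inblock s e f h = true -> hvert f h = hvert f e.
Proof.
  intros V h. remember (fst h) as n eqn:Hn. revert h Hn.
  induction n as [n IH] using (well_founded_ind Nat.lt_wf_0).
  intros [n' b] Hn Hrange Hin; simpl in Hn; subst n'.
  destruct (Nat.le_gt_cases n s) as [Hl|Hl].
  - rewrite inblock_early in Hin by exact Hl. simpl in Hin.
    apply andb_prop in Hin as [H1 H2].
    apply Nat.eqb_eq in H1. apply Bool.eqb_prop in H2.
    destruct e; simpl in *; subst; reflexivity.
  - destruct b; [|now rewrite inblock_tail in Hin by exact Hl].
    rewrite (inblock_head N f n V ltac:(lia)) in Hin.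
    unfold hvert at 1. simpl. rewrite (target_unfold N f n V Hrange).
    destruct (f n) as [i|i|i] eqn:E; [discriminate| |].
    + pose proof (valid_copy N f n i V Hrange (or_introl E)).
      now rewrite <- (IH i ltac:(lia) (i, true)) by (simpl; auto; lia).
    + pose proof (valid_copy N f n i V Hrange (or_intror E)).
      now rewrite <- (IH i ltac:(lia) (i, false)) by (simpl; auto; lia).
Qed.

End Blocks.

Definition sumR {A : Type} (l : list A) (w : A -> R) : R := fold_right Rplus 0 (map w l).

Definition indicator (b : bool) : R := if b then 1 else 0.

Definition block_count (s : nat) (e : halfedge) (N : nat) (f : history) : nat :=
  length (filter (inblock s e f) (halfedges N)).

Definition joins (s : nat) (e : halfedge) (f : history) (c : choice) : bool :=
  match c with
  | Unif _ => false
  | HeadC i => inblock s e f (i, true)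
  | TailC i => inblock s e f (i, false)
  end.

Lemma sumR_app {A : Type} (l1 l2 : list A) w : sumR (l1 ++ l2) w = sumR l1 w + sumR l2 w.
Proof. induction l1 as [|a l1 IH]; unfold sumR in *; simpl; [ring|]. rewrite IH. ring. Qed.

Lemma sumR_map {A B : Type} (g : A -> B) l w : sumR (map g l) w = sumR l (fun x => w (g x)).
Proof. unfold sumR. now rewrite map_map. Qed.

Lemma sumR_ext {A : Type} (l : list A) u v : (forall x, In x l -> u x = v x) ->
  sumR l u = sumR l v.
Proof. intros H. unfold sumR. f_equal. now apply map_ext_in. Qed.

Lemma sumR_plus {A : Type} (l : list A) u v :
  sumR l (fun x => u x + v x) = sumR l u + sumR l v.
Proof. induction l as [|a l IH]; unfold sumR in *; simpl; [ring|]. rewrite IH. ring. Qed.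

Lemma sumR_scal {A : Type} (l : list A) k u : sumR l (fun x => k * u x) = k * sumR l u.
Proof. induction l as [|a l IH]; unfold sumR in *; simpl; [ring|]. rewrite IH. ring. Qed.

Lemma sumR_const {A : Type} (l : list A) k : sumR l (fun _ => k) = INR (length l) * k.
Proof.
  induction l as [|a l IH]; unfold sumR in *; cbn [length map fold_right]; [simpl; ring|].
  rewrite IH, S_INR. ring.
Qed.

Lemma count_halfedges (P : halfedge -> bool) L :
  INR (length (filter P (flat_map (fun i => [(i, true); (i, false)]) L))) =
  sumR L (fun i => indicator (P (i, true)) + indicator (P (i, false))).
Proof.
  induction L as [|a L IH]; [reflexivity|]. unfold sumR in *.
  destruct (P (a, true)) eqn:E1, (P (a, false)) eqn:E2;
    cbn [filter length flat_map app map fold_right]; rewrite ?E1, ?E2;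
    cbn [length]; rewrite ?S_INR, IH; unfold indicator; ring.
Qed.

Lemma halfedges_S N : (1 <= N)%nat ->
  halfedges (S N) = halfedges N ++ [(S N, true); (S N, false)].
Proof.
  intros HN. unfold halfedges. destruct N as [|N']; [lia|].
  replace (S (S N') - 1)%nat with (S N') by lia.
  replace (S N' - 1)%nat with N' by lia.
  now rewrite seq_S, flat_map_app.
Qed.

Lemma in_halfedges N h : In h (halfedges N) -> (2 <= fst h <= N)%nat.
Proof.
  unfold halfedges. rewrite in_flat_map. intros [i [Hi Hh]].
  apply in_seq in Hi. simpl in Hh. destruct Hh as [<-|[<-|[]]]; simpl; lia.
Qed.

Lemma block_count_init s e f : (2 <= fst e <= s)%nat -> INR (block_count s e s f) = 1.
Proof.
  intros He. unfold block_count, halfedges. rewrite count_halfedges.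
  assert (Hseq : forall a len, (a <= fst e < a + len)%nat ->
            sumR (seq a len) (fun i => indicator (i =? fst e)) = 1).
  { intros a len. revert a. induction len as [|len IH]; intros a Ha; [lia|].
    change (indicator (a =? fst e) + sumR (seq (S a) len) (fun i => indicator (i =? fst e))
            = 1).
    destruct (Nat.eqb_spec a (fst e)) as [->|ne].
    - rewrite (sumR_ext _ _ (fun _ => 0)), sumR_const; [unfold indicator; ring|].
      intros i Hi. apply in_seq in Hi. now destruct (Nat.eqb_spec i (fst e)); [lia|].
    - rewrite IH by lia. unfold indicator; ring. }
  rewrite <- (Hseq 2%nat (s - 1)%nat) by lia. apply sumR_ext. intros i Hi.
  apply in_seq in Hi. rewrite !inblock_early by (simpl; lia). simpl.
  destruct (i =? fst e), (snd e); unfold indicator; simpl; ring.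
Qed.

Lemma block_count_step s e N f c : (1 <= s)%nat -> (s <= N)%nat -> valid N f ->
  In c (Omega (S N)) ->
  INR (block_count s e (S N) (update f (S N) c))
  = INR (block_count s e N f) + indicator (joins s e f c).
Proof.
  intros Hs HsN V Hc.
  pose proof (valid_update N f c V Hc) as V'.
  assert (A : agree N f (update f (S N) c)) by (apply agree_update; auto; intros i _; auto).
  unfold block_count. rewrite halfedges_S by lia. rewrite filter_app, length_app, plus_INR.
  rewrite (filter_ext_in _ (inblock s e f)).
  2:{ intros h Hh. apply (inblock_agree s e Hs N); auto. apply in_halfedges in Hh. lia. }
  f_equal. cbn [filter].
  rewrite (inblock_head s e Hs (S N) _ (S N) V' ltac:(lia)), update_eq.
  rewrite (inblock_tail s e _ (S N)) by lia.
  pose proof (in_Omega_of _ _ Hc) as Hc'.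
  destruct c as [i|i|i]; simpl in Hc' |- *; [reflexivity| |];
    rewrite (inblock_agree s e Hs N f) by (auto; simpl; lia);
    destruct (inblock s e f _); reflexivity.
Qed.

Lemma joins_exclusive s e1 e2 N f c : (1 <= s)%nat -> valid N f ->
  hvert f e1 <> hvert f e2 -> In c (Omega (S N)) ->
  (joins s e1 f c && joins s e2 f c)%bool = false.
Proof.
  intros Hs V Hd Hc. apply in_Omega_of in Hc.
  destruct (joins s e1 f c) eqn:J1, (joins s e2 f c) eqn:J2; auto.
  exfalso. apply Hd.
  destruct c as [i|i|i]; simpl in Hc, J1, J2; [discriminate| |];
    [set (h := (i, true)) | set (h := (i, false))];
    rewrite <- (inblock_hvert s e1 Hs N f V h), <- (inblock_hvert s e2 Hs N f V h);
    simpl; auto; lia.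
Qed.

Lemma block_size_count m j s t e f0 g : (1 <= s)%nat -> valid s f0 ->
  (2 <= fst e <= s)%nat -> group m (hvert f0 e) = j ->
  valid t g -> agree s f0 g ->
  block_size m j s t e g = INR (block_count s e t g).
Proof.
  intros Hs V0 He Hg Vg A. unfold block_size, block_count. do 2 f_equal.
  apply filter_ext_in. intros h Hh. apply in_halfedges in Hh.
  destruct (inblock s e g h) eqn:I; [|apply Bool.andb_false_r].
  rewrite (inblock_hvert s e Hs t g Vg h Hh I), (hvert_agree s f0 g e V0 A He), Hg.
  now rewrite Nat.eqb_refl.
Qed.

(** ** Expectations of geometrically growing quantities *)

Section Expectation.

Variable beta : R.
Hypothesis beta_pos : 0 < beta.

(** [denom N = (2+beta) N - 2] normalises the law of [f_(N+1)]. *)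
Definition denom (N : nat) : R := (2 + beta) * INR N - 2.

Fixpoint growth (r : R) (len N : nat) : R :=
  match len with
  | O => 1
  | S l => (1 + r / denom N) * growth r l (S N)
  end.

Lemma denom_pos N : (2 <= N)%nat -> 0 < denom N.
Proof. intros HN. unfold denom. apply le_INR in HN. simpl in HN. nra. Qed.

Lemma prob_S N c :
  prob beta (S N) c = (match c with Unif _ => beta | _ => 1 end) / denom N.
Proof. unfold prob, denom. now replace (S N - 1)%nat with N by lia. Qed.

Lemma Omega_S N : Omega (S N) =
  map Unif (seq 1 N) ++ map HeadC (seq 2 (N - 1)) ++ map TailC (seq 2 (N - 1)).
Proof.
  unfold Omega. replace (S N - 1)%nat with N by lia.
  now replace (S N - 2)%nat with (N - 1)%nat by lia.
Qed.

Lemma sum_prob N : (2 <= N)%nat -> sumR (Omega (S N)) (prob beta (S N)) = 1.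
Proof.
  intros HN. pose proof (denom_pos N HN) as HD.
  rewrite Omega_S, !sumR_app, !sumR_map.
  rewrite (sumR_ext _ _ (fun _ => beta / denom N)) by (intros; apply prob_S).
  rewrite (sumR_ext (seq 2 (N - 1)) _ (fun _ => 1 / denom N)) by (intros; apply prob_S).
  rewrite (sumR_ext (seq 2 (N - 1)) (fun x => prob beta (S N) (TailC x))
             (fun _ => 1 / denom N)) by (intros; apply prob_S).
  rewrite !sumR_const, !length_seq, minus_INR by lia.
  unfold denom in *. simpl. field. lra.
Qed.

Lemma sum_prob_joins s e N f :
  sumR (Omega (S N)) (fun c => prob beta (S N) c * indicator (joins s e f c))
  = INR (block_count s e N f) / denom N.
Proof.
  rewrite Omega_S, !sumR_app, !sumR_map.
  rewrite (sumR_ext (seq 1 N) _ (fun _ => 0)), sumR_const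
    by (intros; simpl; unfold indicator; ring).
  rewrite (sumR_ext (seq 2 (N - 1)) _
             (fun x => / denom N * indicator (inblock s e f (x, true))))
    by (intros; rewrite prob_S; simpl; unfold Rdiv; ring).
  rewrite (sumR_ext (seq 2 (N - 1)) (fun x => prob beta (S N) (TailC x) * _)
             (fun x => / denom N * indicator (inblock s e f (x, false))))
    by (intros; rewrite prob_S; simpl; unfold Rdiv; ring).
  rewrite !sumR_scal. unfold block_count, halfedges.
  rewrite count_halfedges, sumR_plus. unfold Rdiv. ring.
Qed.

Lemma expect_ext : forall len N f X Y, valid N f ->
  (forall g, valid (N + len) g -> agree N f g -> X g = Y g) ->
  expect beta len (S N) f X = expect beta len (S N) f Y.
Proof.
  intro len. induction len as [|l IH]; intros N f X Y V H.
  - apply H; [now rewrite Nat.add_0_r|intros i _; reflexivity].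
  - cbn [expect]. f_equal. apply map_ext_in. intros c Hc. f_equal.
    apply IH; [now apply valid_update|].
    intros g Vg A. apply H; [now replace (N + S l)%nat with (S N + l)%nat by lia|].
    intros i Hi. rewrite A by lia. now apply update_neq; lia.
Qed.

Lemma expect_geometric (r : R) (Q : nat -> history -> R) (Inv : nat -> history -> Prop) :
  (forall N f c, Inv N f -> In c (Omega (S N)) -> Inv (S N) (update f (S N) c)) ->
  (forall N f, Inv N f ->
     sumR (Omega (S N)) (fun c => prob beta (S N) c * Q (S N) (update f (S N) c))
     = (1 + r / denom N) * Q N f) ->
  forall len N f, Inv N f -> expect beta len (S N) f (Q (N + len)%nat) = Q N f * growth r len N.
Proof.
  intros Hinv Hstep len. induction len as [|l IH]; intros N f I.
  - cbn [expect growth]. rewrite Nat.add_0_r. ring.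
  - cbn [expect growth]. replace (N + S l)%nat with (S N + l)%nat by lia.
    change (sumR (Omega (S N)) (fun c => prob beta (S N) c *
              expect beta l (S (S N)) (update f (S N) c) (Q (S N + l)%nat))
            = Q N f * ((1 + r / denom N) * growth r l (S N))).
    rewrite (sumR_ext _ _ (fun c => growth r l (S N) *
               (prob beta (S N) c * Q (S N) (update f (S N) c)))).
    2:{ intros c Hc. rewrite IH by auto. ring. }
    rewrite sumR_scal, Hstep by exact I. ring.
Qed.

End Expectation.

(** ** The first two moments of the block sizes *)

Definition continuation (s : nat) (f0 : history) (N : nat) (f : history) : Prop :=
  (s <= N)%nat /\ valid N f /\ agree s f0 f.

Lemma continuation_update s f0 N f c : continuation s f0 N f -> In c (Omega (S N)) ->
  continuation s f0 (S N) (update f (S N) c).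
Proof.
  intros [HsN [V A]] Hc. repeat split; [lia|now apply valid_update|].
  now apply agree_update.
Qed.

Section Moments.

Variables (beta : R) (s : nat) (f0 : history).
Hypothesis beta_pos : 0 < beta.
Hypothesis s_ge2 : (2 <= s)%nat.
Hypothesis f0_valid : valid s f0.

Lemma mean_block_count e len : (2 <= fst e <= s)%nat ->
  expect beta len (S s) f0 (fun g => INR (block_count s e (s + len) g))
  = growth beta 1 len s.
Proof.
  intros He. transitivity (INR (block_count s e s f0) * growth beta 1 len s).
  2:{ rewrite (block_count_init s e f0 He). ring. }
  apply (expect_geometric beta 1 (fun N g => INR (block_count s e N g)) (continuation s f0));
    [exact (continuation_update s f0)| |repeat split; auto; intros i _; reflexivity].
  intros N f (HsN & V & _). pose proof (denom_pos beta beta_pos N ltac:(lia)).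
  rewrite (sumR_ext _ _ (fun c => INR (block_count s e N f) * prob beta (S N) c
             + prob beta (S N) c * indicator (joins s e f c))).
  2:{ intros c Hc. rewrite block_count_step by (auto; lia). ring. }
  rewrite sumR_plus, sumR_scal, (sum_prob beta beta_pos N), sum_prob_joins by lia. field. lra.
Qed.

Lemma mean_block_product e1 e2 len : (2 <= fst e1 <= s)%nat -> (2 <= fst e2 <= s)%nat ->
  hvert f0 e1 <> hvert f0 e2 ->
  expect beta len (S s) f0
    (fun g => INR (block_count s e1 (s + len) g) * INR (block_count s e2 (s + len) g))
  = growth beta 2 len s.
Proof.
  intros He1 He2 Hd.
  transitivity (INR (block_count s e1 s f0) * INR (block_count s e2 s f0)
                * growth beta 2 len s).
  2:{ rewrite (block_count_init s e1 f0 He1), (block_count_init s e2 f0 He2). ring. }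
  apply (expect_geometric beta 2
           (fun N g => INR (block_count s e1 N g) * INR (block_count s e2 N g))
           (continuation s f0));
    [exact (continuation_update s f0)| |repeat split; auto; intros i _; reflexivity].
  intros N f (HsN & V & A). pose proof (denom_pos beta beta_pos N ltac:(lia)).
  set (X := INR (block_count s e1 N f)). set (Y := INR (block_count s e2 N f)).
  assert (Hd' : hvert f e1 <> hvert f e2)
    by now rewrite (hvert_agree s f0 f e1), (hvert_agree s f0 f e2).
  rewrite (sumR_ext _ _ (fun c => X * Y * prob beta (S N) c
             + (Y * (prob beta (S N) c * indicator (joins s e1 f c))
                + X * (prob beta (S N) c * indicator (joins s e2 f c))))).
  2:{ intros c Hc. rewrite !block_count_step by (auto; lia). fold X Y.
      pose proof (joins_exclusive s e1 e2 N f c ltac:(lia) V Hd' Hc) as Hx.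
      destruct (joins s e1 f c), (joins s e2 f c); try discriminate;
        unfold indicator; ring. }
  rewrite !sumR_plus, !sumR_scal, (sum_prob beta beta_pos N), !sum_prob_joins by lia.
  fold X Y. field. lra.
Qed.

End Moments.

Lemma expected_block_size beta m j s t e f0 : 0 < beta -> (2 <= s)%nat -> (s <= t)%nat ->
  valid s f0 -> (2 <= fst e <= s)%nat -> group m (hvert f0 e) = j ->
  E beta s t f0 (block_size m j s t e) = growth beta 1 (t - s) s.
Proof.
  intros Hb Hs Hst V0 He Hg. unfold E.
  rewrite <- (mean_block_count beta s f0 Hb Hs V0 e (t - s) He).
  apply expect_ext; [exact V0|]. intros g Vg A.
  replace (s + (t - s))%nat with t in * by lia.
  apply (block_size_count m j s t e f0); auto; lia.
Qed.

Lemma expected_block_product beta m j k s t e1 e2 f0 : 0 < beta -> (2 <= s)%nat ->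
  (s <= t)%nat -> valid s f0 -> j <> k ->
  (2 <= fst e1 <= s)%nat -> group m (hvert f0 e1) = j ->
  (2 <= fst e2 <= s)%nat -> group m (hvert f0 e2) = k ->
  E beta s t f0 (fun f => block_size m j s t e1 f * block_size m k s t e2 f)
  = growth beta 2 (t - s) s.
Proof.
  intros Hb Hs Hst V0 Hjk He1 Hg1 He2 Hg2. unfold E.
  assert (Hd : hvert f0 e1 <> hvert f0 e2) by (intros Heq; apply Hjk; congruence).
  rewrite <- (mean_block_product beta s f0 Hb Hs V0 e1 e2 (t - s) He1 He2 Hd).
  apply expect_ext; [exact V0|]. intros g Vg A.
  replace (s + (t - s))%nat with t in * by lia.
  rewrite (block_size_count m j s t e1 f0), (block_size_count m k s t e2 f0); auto; lia.
Qed.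

(** ** Estimating the growth products *)

Lemma exp_le_compat x y : x <= y -> exp x <= exp y.
Proof. intros [Hlt| ->]; [now apply Rlt_le, exp_increasing|apply Rle_refl]. Qed.

(** [ln (x+1) - ln x >= 1/(x+1)], from [exp y >= 1 + y] at [y = -1/(x+1)]. *)
Lemma ln_succ_lower x : 0 < x -> 1 / (x + 1) <= ln (x + 1) - ln x.
Proof.
  intros Hx.
  assert (Hq : 0 < x / (x + 1)) by (apply Rdiv_lt_0_compat; lra).
  assert (H : x / (x + 1) <= exp (- (1 / (x + 1)))).
  { replace (x / (x + 1)) with (1 + - (1 / (x + 1))) by (field; lra).
    apply exp_ineq1_le. }
  assert (Hln : ln (x / (x + 1)) <= - (1 / (x + 1))).
  { apply Rnot_lt_le. intros Hlt. apply exp_increasing in Hlt.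
    rewrite exp_ln in Hlt by exact Hq. lra. }
  unfold Rdiv at 1 in Hln.
  rewrite ln_mult, ln_Rinv in Hln by (try apply Rinv_0_lt_compat; lra). lra.
Qed.

(** [exp x <= 1 + e^2 x] on [[0, 2]], from [exp (-x) >= 1 - x]. *)
Lemma exp_le_affine x : 0 <= x <= 2 -> exp x <= 1 + x * exp 2.
Proof.
  intros Hx. pose proof (exp_ineq1_le (- x)) as H. rewrite exp_Ropp in H.
  pose proof (exp_pos x) as Hp.
  assert (H1 : (1 - x) * exp x <= 1).
  { replace 1 with (/ exp x * exp x) at 2 by (field; lra).
    apply Rmult_le_compat_r; lra. }
  assert (H2 : x * exp x <= x * exp 2) by (apply Rmult_le_compat_l; [lra|apply exp_le_compat; lra]).
  nra.
Qed.

(** The potential whose increments dominate [ln (1 + 1/(g x - 2))]. *)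
Definition potential (g x : R) : R := ln x / g - 2 / x.

Lemma step_le_exp_potential g x : 2 < g -> 2 <= x ->
  1 + 1 / (g * x - 2) <= exp (potential g (x + 1) - potential g x).
Proof.
  intros Hg Hx. eapply Rle_trans; [apply exp_ineq1_le|apply exp_le_compat].
  pose proof (ln_succ_lower x ltac:(lra)) as Hln.
  assert (Hgx : 0 < g * x - 2) by nra.
  assert (Hlog : 1 / (g * (x + 1)) <= (ln (x + 1) - ln x) / g).
  { replace (1 / (g * (x + 1))) with (1 / (x + 1) / g) by (field; lra).
    unfold Rdiv. apply Rmult_le_compat_r; [left; apply Rinv_0_lt_compat; lra|exact Hln]. }
  assert (Hrat : 0 <= 1 / (g * (x + 1)) + 2 / x - 2 / (x + 1) - 1 / (g * x - 2)).
  { replace (1 / (g * (x + 1)) + 2 / x - 2 / (x + 1) - 1 / (g * x - 2))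
      with ((x * (2 * g * g - g - 2) - 4 * g) * / (g * x * (x + 1) * (g * x - 2)))
      by (field; repeat split; lra).
    apply Rle_mult_inv_pos; [|apply Rmult_lt_0_compat; [nra|lra]].
    assert (0 <= (2 * g + 1) * (g - 2)) by nra.
    assert (0 <= (x - 2) * (2 * g * g - g - 2)) by (apply Rmult_le_pos; nra).
    nra. }
  unfold potential.
  replace ((ln (x + 1) / g - 2 / (x + 1)) - (ln x / g - 2 / x))
    with ((ln (x + 1) - ln x) / g + 2 / x - 2 / (x + 1)) by (field; lra).
  lra.
Qed.

Section Growth.

Variable beta : R.
Hypothesis beta_pos : 0 < beta.

Lemma growth_nonneg r : 0 <= r -> forall len N, (2 <= N)%nat -> 0 <= growth beta r len N.
Proof.
  intros Hr len. induction len as [|l IH]; intros N HN; cbn [growth]; [lra|].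
  apply Rmult_le_pos; [|apply IH; lia].
  pose proof (denom_pos beta beta_pos N HN).
  assert (0 <= r / denom beta N) by (apply Rle_mult_inv_pos; lra). lra.
Qed.

(** Negative correlation: [1 + 2/D <= (1 + 1/D)^2] factor by factor. *)
Lemma growth2_le_sq len N : (2 <= N)%nat ->
  growth beta 2 len N <= growth beta 1 len N * growth beta 1 len N.
Proof.
  revert N. induction len as [|l IH]; intros N HN; cbn [growth]; [lra|].
  pose proof (denom_pos beta beta_pos N HN) as HD.
  pose proof (growth_nonneg 2 ltac:(lra) l (S N) ltac:(lia)).
  replace ((1 + 1 / denom beta N) * growth beta 1 l (S N)
           * ((1 + 1 / denom beta N) * growth beta 1 l (S N)))
    with ((1 + 1 / denom beta N) * (1 + 1 / denom beta N)
          * (growth beta 1 l (S N) * growth beta 1 l (S N))) by ring.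
  apply Rmult_le_compat; [|assumption| |apply IH; lia].
  - assert (0 <= 2 / denom beta N) by (apply Rle_mult_inv_pos; lra). lra.
  - assert (0 <= 1 / denom beta N * (1 / denom beta N)) by apply Rle_0_sqr.
    replace (2 / denom beta N) with (1 / denom beta N + 1 / denom beta N) by (field; lra).
    nra.
Qed.

(** [growth 1] telescopes against the potential. *)
Lemma growth1_le_exp len N : (2 <= N)%nat ->
  growth beta 1 len N
  <= exp (potential (2 + beta) (INR (N + len)) - potential (2 + beta) (INR N)).
Proof.
  revert N. induction len as [|l IH]; intros N HN; cbn [growth].
  - rewrite Nat.add_0_r, Rminus_diag, exp_0. lra.
  - assert (HNr : 2 <= INR N) by (apply le_INR in HN; simpl in HN; lra).
    eapply Rle_trans.
    { apply Rmult_le_compat.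
      - pose proof (denom_pos beta beta_pos N HN).
        assert (0 <= 1 / denom beta N) by (apply Rle_mult_inv_pos; lra). lra.
      - apply growth_nonneg; [lra|lia].
      - apply (step_le_exp_potential (2 + beta) (INR N)); lra.
      - apply IH. lia. }
    rewrite <- exp_plus. apply exp_le_compat.
    replace (S N + l)%nat with (N + S l)%nat by lia. rewrite S_INR. lra.
Qed.

Lemma growth1_sq_bound s t : (2 <= s)%nat -> (s <= t)%nat ->
  growth beta 1 (t - s) s * growth beta 1 (t - s) s
  <= Rpower (INR t / INR s) (2 / (2 + beta)) * (1 + 4 * exp 2 / INR s).
Proof.
  intros Hs Hst.
  assert (HS : 2 <= INR s) by (apply le_INR in Hs; simpl in Hs; lra).
  assert (HT : INR s <= INR t) by (apply le_INR; exact Hst).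
  pose proof (growth1_le_exp (t - s) s Hs) as G.
  replace (s + (t - s))%nat with t in G by lia.
  pose proof (growth_nonneg 1 ltac:(lra) (t - s) s Hs) as G0.
  assert (Hpot : 2 * (potential (2 + beta) (INR t) - potential (2 + beta) (INR s))
                 <= 2 / (2 + beta) * ln (INR t / INR s) + 4 / INR s).
  { assert (Hq : ln (INR t / INR s) = ln (INR t) - ln (INR s)).
    { unfold Rdiv. rewrite ln_mult, ln_Rinv; try apply Rinv_0_lt_compat; lra. }
    assert (0 <= 2 / INR t) by (apply Rle_mult_inv_pos; lra).
    rewrite Hq. unfold potential.
    replace (2 * (ln (INR t) / (2 + beta) - 2 / INR t - (ln (INR s) / (2 + beta) - 2 / INR s)))
      with (2 / (2 + beta) * (ln (INR t) - ln (INR s)) + 4 / INR s - 2 * (2 / INR t))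
      by (field; lra).
    lra. }
  eapply Rle_trans; [apply Rmult_le_compat; eassumption|].
  rewrite <- exp_plus.
  eapply Rle_trans;
    [apply (exp_le_compat _ (2 / (2 + beta) * ln (INR t / INR s) + 4 / INR s)); lra|].
  rewrite exp_plus. unfold Rpower.
  apply Rmult_le_compat_l; [left; apply exp_pos|].
  replace (4 * exp 2 / INR s) with (4 / INR s * exp 2) by (field; lra).
  apply exp_le_affine. split; [apply Rle_mult_inv_pos; lra|].
  apply (Rmult_le_reg_r (INR s)); [lra|]. field_simplify; lra.
Qed.

End Growth.

Theorem lemma5 (beta : R) (hbeta : 0 < beta) :
  exists C : R, 0 < C /\
  forall (m j k s : nat) (f0 : history) (e1 e2 : halfedge) (t : nat),
    (1 <= m)%nat -> (1 <= j)%nat -> (1 <= k)%nat -> j <> k ->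
    (j * m <= s)%nat -> (k * m <= s)%nat ->
    (forall n, (2 <= n <= s)%nat -> in_Omega n (f0 n)) ->
    (2 <= fst e1 <= s)%nat -> group m (hvert f0 e1) = j ->
    (2 <= fst e2 <= s)%nat -> group m (hvert f0 e2) = k ->
    (s <= t)%nat ->
    E beta s t f0 (fun f => block_size m j s t e1 f * block_size m k s t e2 f)
      <= E beta s t f0 (block_size m j s t e1) * E beta s t f0 (block_size m k s t e2)
    /\
    E beta s t f0 (block_size m j s t e1) * E beta s t f0 (block_size m k s t e2)
      <= Rpower (INR t / INR s) (2 / (2 + beta)) * (1 + C / INR s).
Proof.
  exists (4 * exp 2). split; [pose proof (exp_pos 2); lra|].
  intros m j k s f0 e1 e2 t Hm Hj Hk Hjk Hjm Hkm V0 He1 Hg1 He2 Hg2 Hst.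
  assert (Hs : (2 <= s)%nat) by lia.
  rewrite (expected_block_product beta m j k s t e1 e2 f0),
          (expected_block_size beta m j s t e1 f0),
          (expected_block_size beta m k s t e2 f0) by auto.
  split.
  - now apply growth2_le_sq.
  - now apply growth1_sq_bound.
Qed.
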